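(* Consider the planar system \[ \frac{du}{dt}=c\left(\frac{\beta u^{2}}{v}-u\right),\qquad \frac{dv}{dt}=b+u^{2}-dv, \] with positive constants $c,\beta,b,d$, regarded as a family in the parameter $b$. Let $b_{SN}=\frac{d^{2}\beta^{2}}{4}$. Then as $b$ passes through $b_{SN}$ the system undergoes a saddle-node bifurcation at the equilibrium $E_{1}=\left(\tfrac{d\beta}{2},\tfrac{d\beta^{2}}{2}\right)$ (which is the unique positive equilibrium when $b=b_{SN}$).
   Context: Saddle-node bifurcation: as the parameter crosses the critical value, two equilibria (here, for $b<b_{SN}$, the positive equilibria $\left(\frac{d\beta\pm\sqrt{d^2\beta^2-4b}}{2},\beta\cdot\frac{d\beta\pm\sqrt{d^2\beta^2-4b}}{2}\right)$) coalesce into a single non-hyperbolic equilibrium and disappear (no positive equilibria for $b>b_{SN}$), with the nondegeneracy/transversality conditions of Sotomayor's theorem satisfied.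
   Formalization: Besides being positive, the constants c and d are assumed to satisfy c ≠ d. The statement above fails without it. *)

From Stdlib Require Import Reals.
From Coquelicot Require Import Coquelicot.
Open Scope R_scope.

Definition pt := (R * R)%type.

Definition field (c beta d b : R) (p : pt) : pt :=
  (c * (beta * (fst p) ^ 2 / snd p - fst p), b + (fst p) ^ 2 - d * snd p).

Definition family := R -> pt -> pt.

Definition comp (i : bool) (p : pt) : R := if i then fst p else snd p.
Definition unit_vec (j : bool) : pt := if j then (1, 0) else (0, 1).
Definition add_sc (x : pt) (t : R) (h : pt) : pt :=
  (fst x + t * fst h, snd x + t * snd h).

(* Partial derivative of the i-th component w.r.t. the j-th state variable
   (true = first component u, false = second component v). *)
Definition pderiv (f : family) (mu : R) (x : pt) (i j : bool) : R :=
  Derive (fun t => comp i (f mu (add_sc x t (unit_vec j)))) 0.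

Definition jac_apply (f : family) mu x (h : pt) : pt :=
  (pderiv f mu x true true * fst h + pderiv f mu x true false * snd h,
   pderiv f mu x false true * fst h + pderiv f mu x false false * snd h).

Definition jac_left (f : family) mu x (w : pt) : pt :=
  (fst w * pderiv f mu x true true + snd w * pderiv f mu x false true,
   fst w * pderiv f mu x true false + snd w * pderiv f mu x false false).

Definition jac_trace (f : family) mu x : R :=
  pderiv f mu x true true + pderiv f mu x false false.

Definition param_deriv (f : family) mu x : pt :=
  (Derive (fun m => fst (f m x)) mu, Derive (fun m => snd (f m x)) mu).

Definition second_deriv (f : family) mu x (h : pt) : pt :=
  (Derive_n (fun t => fst (f mu (add_sc x t h))) 2 0,
   Derive_n (fun t => snd (f mu (add_sc x t h))) 2 0).

Definition dot (a b : pt) : R := fst a * fst b + snd a * snd b.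

(* Differentiability requirements making the above derivatives meaningful:
   the partial derivatives, the parameter derivative and the second
   directional derivatives exist at (mu0, x0). *)
Definition derivs_exist (f : family) mu0 x0 (h : pt) : Prop :=
  (forall i j, ex_derive (fun t => comp i (f mu0 (add_sc x0 t (unit_vec j)))) 0) /\
  (forall i, ex_derive (fun m => comp i (f m x0)) mu0) /\
  (forall i, ex_derive_n (fun t => comp i (f mu0 (add_sc x0 t h))) 2 0).

(* Hypotheses of Sotomayor's theorem for a saddle-node bifurcation of the
   planar family x' = f(mu, x) at (mu0, x0):
   - x0 is an equilibrium at mu0;
   - D_x f(mu0,x0) has 0 as a SIMPLE eigenvalue (planar case: some nonzero
     right eigenvector v and left eigenvector w for 0, and nonzero trace, so
     the other eigenvalue is nonzero);
   - transversality:   w . f_mu(mu0,x0) <> 0;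
   - nondegeneracy:    w . D^2_x f(mu0,x0)(v,v) <> 0. *)
Definition sotomayor_saddle_node (f : family) (mu0 : R) (x0 : pt) : Prop :=
  f mu0 x0 = (0, 0) /\
  exists v w : pt,
    v <> (0, 0) /\ w <> (0, 0) /\
    derivs_exist f mu0 x0 v /\
    jac_apply f mu0 x0 v = (0, 0) /\
    jac_left f mu0 x0 w = (0, 0) /\
    jac_trace f mu0 x0 <> 0 /\
    dot w (param_deriv f mu0 x0) <> 0 /\
    dot w (second_deriv f mu0 x0 v) <> 0.

Definition pos_equilibrium (c beta d b : R) (p : pt) : Prop :=
  0 < fst p /\ 0 < snd p /\ field c beta d b p = (0, 0).

From Stdlib Require Import Reals Lra Psatz.
From Coquelicot Require Import Coquelicot.
Open Scope R_scope.

(* Positive equilibria lie on the nullcline v = beta u, where the second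
   equation reduces to u^2 - d beta u + b = 0, with discriminant
   d^2 beta^2 - 4 b: two, one or no positive roots according as b is below,
   at or above b_SN.  At E1 = (u, beta u), u = d beta / 2, the Jacobian is
   [[c, -c/beta], [d beta, -d]]: it kills v = (1, beta), is killed by
   w = (d beta, -c), and has trace c - d <> 0.  Since f_b = (0, 1), w . f_b = -c;
   along the line E1 + t v the first component vanishes identically and the
   second is a quadratic in t with leading coefficient 1, so
   w . D^2 f (v, v) = -2 c. *)

Lemma quadratic_root_iff s b u : 0 <= s ^ 2 - 4 * b ->
  u ^ 2 - s * u + b = 0 <->
  u = (s + sqrt (s ^ 2 - 4 * b)) / 2 \/ u = (s - sqrt (s ^ 2 - 4 * b)) / 2.
Proof.
  intros hdisc.
  set (r := sqrt (s ^ 2 - 4 * b)).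
  assert (hr : r * r = s ^ 2 - 4 * b) by (apply sqrt_sqrt; exact hdisc).
  assert (factor : u ^ 2 - s * u + b = (u - (s + r) / 2) * (u - (s - r) / 2)) by nra.
  rewrite factor; split.
  - intros h; destruct (Rmult_integral _ _ h); [left | right]; lra.
  - intros [-> | ->]; ring.
Qed.

Lemma quadratic_pos_of_neg_discr s b u : s ^ 2 < 4 * b -> 0 < u ^ 2 - s * u + b.
Proof. intros hdisc; assert (0 <= (u - s / 2) ^ 2) by apply pow2_ge_0; nra. Qed.

Lemma quadratic_smaller_root_pos s b : 0 < s -> 0 < b -> 0 <= s ^ 2 - 4 * b ->
  0 < (s - sqrt (s ^ 2 - 4 * b)) / 2.
Proof.
  intros hs hb hdisc.
  assert (hr : sqrt (s ^ 2 - 4 * b) * sqrt (s ^ 2 - 4 * b) = s ^ 2 - 4 * b)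
    by (apply sqrt_sqrt; exact hdisc).
  pose proof (sqrt_pos (s ^ 2 - 4 * b)); nra.
Qed.

Lemma pos_equilibrium_iff_nullcline_root c beta d b p : c <> 0 -> 0 < beta ->
  pos_equilibrium c beta d b p <->
  0 < fst p /\ snd p = beta * fst p /\ fst p ^ 2 - d * beta * fst p + b = 0.
Proof.
  intros hc hbeta; destruct p as [u v]; unfold pos_equilibrium, field; simpl.
  split.
  - intros [hu [hv heq]]; injection heq as hfu hfv.
    assert (hbu : beta * (u * (u * 1)) / v = u)
      by (destruct (Rmult_integral _ _ hfu); [contradiction | lra]).
    assert (hnull : v = beta * u).
    { apply (Rmult_eq_reg_l u); [|lra].
      rewrite <- hbu at 1; field; lra. }
    subst v; repeat split; [lra | nra].
  - intros [hu [-> hq]]; repeat split; [lra | nra |].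
    f_equal; [field; split; lra | nra].
Qed.

Lemma pos_equilibrium_roots c beta d b p :
  c <> 0 -> 0 < beta -> 0 < d -> 0 < b -> 0 <= d ^ 2 * beta ^ 2 - 4 * b ->
  pos_equilibrium c beta d b p <->
  p = ((d * beta + sqrt (d ^ 2 * beta ^ 2 - 4 * b)) / 2,
       beta * ((d * beta + sqrt (d ^ 2 * beta ^ 2 - 4 * b)) / 2)) \/
  p = ((d * beta - sqrt (d ^ 2 * beta ^ 2 - 4 * b)) / 2,
       beta * ((d * beta - sqrt (d ^ 2 * beta ^ 2 - 4 * b)) / 2)).
Proof.
  intros hc hbeta hd hb hdisc.
  rewrite pos_equilibrium_iff_nullcline_root by assumption.
  rewrite <- Rpow_mult_distr in *.
  assert (hdb : 0 < d * beta) by nra.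
  assert (hsmall := quadratic_smaller_root_pos (d * beta) b hdb hb hdisc).
  pose proof (sqrt_pos ((d * beta) ^ 2 - 4 * b)).
  destruct p as [u v]; cbn [fst snd]; rewrite quadratic_root_iff by exact hdisc.
  set (r := sqrt ((d * beta) ^ 2 - 4 * b)) in *.
  split.
  - intros [_ [-> [-> | ->]]]; auto.
  - intros [h | h]; injection h as -> ->; (split; [lra | auto]).
Qed.

Lemma pos_equilibrium_double_root c beta d p : c <> 0 -> 0 < beta -> 0 < d ->
  pos_equilibrium c beta d (d ^ 2 * beta ^ 2 / 4) p <->
  p = (d * beta / 2, d * beta ^ 2 / 2).
Proof.
  intros hc hbeta hd.
  assert (hdisc : d ^ 2 * beta ^ 2 - 4 * (d ^ 2 * beta ^ 2 / 4) = 0) by field.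
  assert (hb : 0 < d ^ 2 * beta ^ 2 / 4).
  { assert (0 < d * beta) by nra; rewrite <- Rpow_mult_distr; nra. }
  rewrite pos_equilibrium_roots by (rewrite ?hdisc; auto with real).
  rewrite hdisc, sqrt_0.
  replace ((d * beta + 0) / 2) with (d * beta / 2) by field.
  replace ((d * beta - 0) / 2) with (d * beta / 2) by field.
  replace (beta * (d * beta / 2)) with (d * beta ^ 2 / 2) by field.
  tauto.
Qed.

Lemma no_pos_equilibrium_above c beta d b p : c <> 0 -> 0 < beta ->
  d ^ 2 * beta ^ 2 / 4 < b -> ~ pos_equilibrium c beta d b p.
Proof.
  intros hc hbeta hb; rewrite pos_equilibrium_iff_nullcline_root by assumption.
  intros [_ [_ hq]].
  assert (hpos := quadratic_pos_of_neg_discr (d * beta) b (fst p)).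
  rewrite Rpow_mult_distr in hpos; lra.
Qed.

Lemma pderiv_field_uu c beta d b u v : v <> 0 ->
  pderiv (field c beta d) b (u, v) true true = c * (2 * beta * u / v - 1).
Proof.
  intros hv; unfold pderiv, field; simpl.
  apply is_derive_unique; auto_derive.
  - lra.
  - field; lra.
Qed.

Lemma pderiv_field_uv c beta d b u v : v <> 0 ->
  pderiv (field c beta d) b (u, v) true false = - c * beta * u ^ 2 / v ^ 2.
Proof.
  intros hv; unfold pderiv, field; simpl.
  apply is_derive_unique; auto_derive.
  - lra.
  - field; lra.
Qed.

Lemma pderiv_field_vu c beta d b u v :
  pderiv (field c beta d) b (u, v) false true = 2 * u.
Proof.
  unfold pderiv, field; simpl.
  apply is_derive_unique; auto_derive; [easy | ring].
Qed.

Lemma pderiv_field_vv c beta d b u v :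
  pderiv (field c beta d) b (u, v) false false = - d.
Proof.
  unfold pderiv, field; simpl.
  apply is_derive_unique; auto_derive; [easy | ring].
Qed.

Lemma ex_derive_field_partial c beta d b u v i j : v <> 0 ->
  ex_derive (fun t => comp i (field c beta d b (add_sc (u, v) t (unit_vec j)))) 0.
Proof.
  intros hv; destruct i, j; unfold field, comp, add_sc, unit_vec; simpl;
    auto_derive; lra.
Qed.

Lemma param_deriv_field c beta d b p : param_deriv (field c beta d) b p = (0, 1).
Proof.
  unfold param_deriv, field; simpl.
  rewrite Derive_const; f_equal.
  apply is_derive_unique; auto_derive; [easy | ring].
Qed.

Lemma ex_derive_field_param c beta d b p i :
  ex_derive (fun m => comp i (field c beta d m p)) b.
Proof. destruct i; unfold field, comp; simpl; auto_derive; easy. Qed.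

Lemma Derive_2_quadratic a0 a1 k x :
  Derive_n (fun t => a0 + a1 * t + k * t ^ 2) 2 x = 2 * k.
Proof.
  simpl. rewrite (Derive_ext _ (fun t => a1 + 2 * k * t)).
  - apply is_derive_unique; auto_derive; [easy | ring].
  - intros t; apply is_derive_unique; auto_derive; [easy | ring].
Qed.

Lemma ex_derive_2_quadratic a0 a1 k x :
  ex_derive_n (fun t => a0 + a1 * t + k * t ^ 2) 2 x.
Proof.
  simpl. apply (ex_derive_ext (fun t => a1 + 2 * k * t)).
  - intros t; symmetry; apply is_derive_unique; auto_derive; [easy | ring].
  - auto_derive; easy.
Qed.

Lemma field_along_nullcline c beta d b u t : beta <> 0 ->
  field c beta d b (add_sc (u, beta * u) t (1, beta)) =
  (0, (b + u ^ 2 - d * beta * u) + (2 * u - d * beta) * t + 1 * t ^ 2).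
Proof.
  intros hbeta; unfold field, add_sc; simpl; f_equal; [|ring].
  replace (beta * u + t * beta) with (beta * (u + t * 1)) by ring.
  (* At u + t = 0 the first component is still 0, since x / 0 = 0 in Rocq. *)
  destruct (Req_dec (u + t * 1) 0) as [-> | hu].
  - unfold Rdiv; rewrite Rmult_0_r, Rinv_0; ring.
  - field; split; lra.
Qed.

Lemma second_deriv_field_nullcline c beta d b u : beta <> 0 ->
  second_deriv (field c beta d) b (u, beta * u) (1, beta) = (0, 2).
Proof.
  intros hbeta; unfold second_deriv; f_equal;
    erewrite Derive_n_ext
      by (intros t; rewrite field_along_nullcline by exact hbeta; reflexivity);
    cbn [fst snd].
  - apply Derive_n_const.
  - rewrite Derive_2_quadratic; ring.
Qed.

Lemma ex_derive_2_field_nullcline c beta d b u i : beta <> 0 ->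
  ex_derive_n (fun t => comp i (field c beta d b (add_sc (u, beta * u) t (1, beta)))) 2 0.
Proof.
  intros hbeta.
  eapply ex_derive_n_ext.
  { intros t; rewrite field_along_nullcline by exact hbeta; reflexivity. }
  destruct i; cbn [comp fst snd];
    [apply ex_derive_n_const | apply ex_derive_2_quadratic].
Qed.

Lemma sotomayor_saddle_node_field c beta d : 0 < c -> 0 < beta -> 0 < d -> c <> d ->
  sotomayor_saddle_node (fun b p => field c beta d b p)
    (d ^ 2 * beta ^ 2 / 4) (d * beta / 2, d * beta ^ 2 / 2).
Proof.
  intros hc hbeta hd hcd.
  split.
  { apply (pos_equilibrium_double_root c beta d); auto with real. }
  set (u := d * beta / 2).
  replace (d * beta ^ 2 / 2) with (beta * u) by (unfold u; field).
  assert (hu : 0 < u) by (unfold u; nra).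
  assert (hdu : 2 * u = d * beta) by (unfold u; field).
  clearbody u.
  exists (1, beta), (d * beta, - c).
  split; [intro h; injection h; lra |].
  split; [intro h; injection h; lra |].
  split; [repeat split |].
  { intros i j; apply ex_derive_field_partial; nra. }
  { intros i; apply ex_derive_field_param. }
  { intros i; apply ex_derive_2_field_nullcline; lra. }
  assert (hv : beta * u <> 0) by nra.
  unfold jac_apply, jac_left, jac_trace, dot.
  rewrite pderiv_field_uu, pderiv_field_uv, pderiv_field_vu, pderiv_field_vv by exact hv.
  rewrite param_deriv_field, second_deriv_field_nullcline by lra.
  replace (c * (2 * beta * u / (beta * u) - 1)) with c by (field; lra).
  replace (- c * beta * u ^ 2 / (beta * u) ^ 2) with (- c / beta) by (field; lra).
  cbn [fst snd]; repeat split.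
  - f_equal; [field; lra | lra].
  - f_equal; [rewrite <- hdu; ring | field; lra].
  - lra.
  - lra.
  - lra.
Qed.

Theorem theorem4 (c beta d : R) (hc : 0 < c) (hbeta : 0 < beta) (hd : 0 < d)
  (hcd : c <> d) :
  let bSN := d ^ 2 * beta ^ 2 / 4 in
  let E1 : pt := (d * beta / 2, d * beta ^ 2 / 2) in
  (* b < b_SN : exactly two distinct positive equilibria *)
  (forall b, 0 < b -> b < bSN ->
     let Ep : pt := ((d * beta + sqrt (d ^ 2 * beta ^ 2 - 4 * b)) / 2,
                     beta * ((d * beta + sqrt (d ^ 2 * beta ^ 2 - 4 * b)) / 2)) in
     let Em : pt := ((d * beta - sqrt (d ^ 2 * beta ^ 2 - 4 * b)) / 2,
                     beta * ((d * beta - sqrt (d ^ 2 * beta ^ 2 - 4 * b)) / 2)) in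
     Ep <> Em /\ forall p, pos_equilibrium c beta d b p <-> (p = Ep \/ p = Em)) /\
  (* b = b_SN : E1 is the unique positive equilibrium *)
  (forall p, pos_equilibrium c beta d bSN p <-> p = E1) /\
  (* b > b_SN : no positive equilibrium *)
  (forall b, bSN < b -> forall p, ~ pos_equilibrium c beta d b p) /\
  (* Sotomayor's saddle-node conditions at (b_SN, E1) *)
  sotomayor_saddle_node (fun b p => field c beta d b p) bSN E1.
Proof.
  intros bSN E1.
  assert (hc0 : c <> 0) by lra.
  split; [| split; [| split]].
  - intros b hb0 hb Ep Em.
    assert (hdisc : 0 < d ^ 2 * beta ^ 2 - 4 * b) by (unfold bSN in hb; lra).
    split.
    + intros h; apply (f_equal fst) in h; unfold Ep, Em in h; cbn [fst] in h.
      pose proof (sqrt_lt_R0 _ hdisc); lra.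
    + intros p; apply pos_equilibrium_roots; auto; lra.
  - intros p; apply pos_equilibrium_double_root; assumption.
  - intros b hb p; apply no_pos_equilibrium_above; assumption.
  - apply sotomayor_saddle_node_field; assumption.
Qed.
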